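(* Let $h:\mathbb{R}\to\mathbb{R}$ be a smooth function with $h(T)=\pi/2$ for $T\le 0$, $0<h(T)<\pi/2$ for $0<T<1$, and $h(T)=0$ for $T\ge 1$. For $0<x<1$ let $g(x)=\tan\bigl(h(x)\bigr)$, and for $0\le x<1$ let $B(x)=\exp\left(\int_0^x \cot\bigl(h(z)\bigr)\,dz\right)$. Assume $g'''(x)<0$ for all $0<x<1$. Fix $\kappa\in(0,1)$ and define, for $\kappa<x<1$, $$\mathcal{D}(x)=\frac{1}{B(x)}\int_\kappa^{x} B'(z)\,\frac{\cos(x-z)}{x-z}\left(\frac{g(x)-g(z)}{x-z}-g'(x)\right)dz .$$ Then $\lim_{x\to 1_-}\mathcal{D}(x)=0$.
   Context: (In the paper the variable $x$ appears as $y+A$, and $\alpha=x-z$.) *)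

From Stdlib Require Import Reals.
From Coquelicot Require Import Coquelicot.
Open Scope R_scope.

Definition cot (x : R) : R := cos x / sin x.

Definition smooth (f : R -> R) : Prop := forall (n : nat) (x : R), ex_derive_n f n x.

Definition gfun (h : R -> R) (x : R) : R := tan (h x).

Definition Bfun (h : R -> R) (x : R) : R := exp (RInt (fun z => cot (h z)) 0 x).

Definition Dfun (h : R -> R) (kappa x : R) : R :=
  / Bfun h x *
  RInt (fun z => Derive (Bfun h) z * (cos (x - z) / (x - z)) *
                 ((gfun h x - gfun h z) / (x - z) - Derive (gfun h) x)) kappa x.

From Stdlib Require Import Reals Lra.
From Coquelicot Require Import Coquelicot.
Open Scope R_scope.

(* By Taylor's formula at x, (g(x) - g(z))/(x - z) - g'(x) = -(x - z) g''(d)/2 for some d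
   between z and x, so the integrand of D is bounded by B'(z) |g''(d)| / 2.  Now g''(1) = 0,
   since h vanishes on [1, oo); splitting [kappa, x] at a point y near 1 where |g''| <= eps gives
   |D(x)| <= (M B(y) / B(x) + eps) / 2 with M = max |g''| on [kappa, 1].  Finally B(x) -> oo as
   x -> 1-: g vanishes at least linearly at 1, so cot h = 1/g is not integrable there. *)

Lemma ball_Rabs (c e u : R) : ball c e u <-> Rabs (u - c) < e.
Proof. reflexivity. Qed.

Lemma MVT_between (f f' : R -> R) (p q : R) : p <> q ->
  (forall c, Rmin p q <= c <= Rmax p q -> is_derive f c (f' c)) ->
  exists c, Rmin p q < c < Rmax p q /\ f q - f p = f' c * (q - p).
Proof.
  intros Hpq Hd. destruct (Rlt_or_le p q) as [Hlt | Hge].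
  - rewrite Rmin_left, Rmax_right in * by lra.
    destruct (MVT_cor2 f f' p q Hlt) as [c [Hc Hin]].
    + intros c Hc. apply is_derive_Reals, Hd; exact Hc.
    + exists c; split; assumption.
  - rewrite Rmin_right, Rmax_left in * by lra.
    destruct (MVT_cor2 f f' q p ltac:(lra)) as [c [Hc Hin]].
    + intros c Hc. apply is_derive_Reals, Hd; exact Hc.
    + exists c; split; [assumption | lra].
Qed.

Lemma continuous_segment_bounded (f : R -> R) (a b : R) : a <= b ->
  (forall t, a <= t <= b -> continuous f t) ->
  exists M, forall t, a <= t <= b -> Rabs (f t) <= M.
Proof.
  intros Hab Hc.
  destruct (continuity_ab_maj (fun t => Rabs (f t)) a b Hab) as [m [Hm _]].
  - intros t Ht. apply continuity_pt_filterlim, continuous_Rabs_comp, Hc, Ht.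
  - exists (Rabs (f m)). exact Hm.
Qed.

Lemma continuous_right_const (f : R -> R) (a c : R) :
  continuous f a -> (forall t, a < t -> f t = c) -> f a = c.
Proof.
  intros Hf Hc.
  apply (filterlim_locally_unique (F := at_right a) f).
  - exact (filterlim_filter_le_1 f (filter_le_within _) Hf).
  - apply (filterlim_ext_loc (fun _ => c)).
    + exists (mkposreal 1 Rlt_0_1). intros t _ Ht. symmetry. apply Hc, Ht.
    + apply filterlim_const.
Qed.

Lemma Rabs_RInt_le_increment (F W w : R -> R) (c a b : R) : a <= b -> ex_RInt F a b ->
  (forall t, a <= t <= b -> is_derive W t (w t) /\ continuous w t) ->
  (forall t, a <= t <= b -> Rabs (F t) <= c * w t) ->
  Rabs (RInt F a b) <= c * (W b - W a).
Proof.
  intros Hab HF HW Hle.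
  apply (norm_RInt_le F (fun t => c * w t) a b); [exact Hab | exact Hle | |].
  { apply (RInt_correct (V := R_CompleteNormedModule)), HF. }
  replace (c * (W b - W a)) with (minus (c * W b) (c * W a))
    by (unfold minus, plus, opp; simpl; ring).
  apply (is_RInt_derive (fun t => c * W t)); rewrite Rmin_left, Rmax_right by lra; intros t Ht.
  - apply (is_derive_scal (fun t => W t)), HW, Ht.
  - apply (continuous_scal_r c w), HW, Ht.
Qed.

Lemma filterlim_log_at_left_1 (L C : R) : 0 < L ->
  filterlim (fun x => C - ln (1 - x) / L) (at_left 1) (Rbar_locally p_infty).
Proof.
  intros HL P [M HM]. exists (mkposreal _ (exp_pos (L * (C - M)))).
  intros x Hx Hx1. change (Rabs (x - 1) < exp (L * (C - M))) in Hx.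
  apply Rabs_def2 in Hx. apply HM.
  assert (Hln : ln (1 - x) < L * (C - M)).
  { rewrite <- (ln_exp (L * (C - M))). apply ln_increasing; lra. }
  apply (Rmult_lt_reg_l L); [exact HL |].
  replace (L * (C - ln (1 - x) / L)) with (L * C - ln (1 - x)) by (field; lra). nra.
Qed.

Definition taylor_quot (f f1 f2 : R -> R) (x z : R) : R :=
  if Req_EM_T z x then f2 x else 2 * (f z - f x - f1 x * (z - x)) / (z - x) ^ 2.

Lemma taylor_quot_between (f f1 f2 : R -> R) (x z : R) :
  (forall t, Rmin x z <= t <= Rmax x z -> is_derive f t (f1 t)) ->
  (forall t, Rmin x z <= t <= Rmax x z -> is_derive f1 t (f2 t)) ->
  exists d, Rmin x z <= d <= Rmax x z /\ taylor_quot f f1 f2 x z = f2 d.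
Proof.
  intros Hf Hf1. unfold taylor_quot. destruct (Req_EM_T z x) as [-> | Hzx].
  { exists x. rewrite Rmin_left, Rmax_left by lra. split; [lra | reflexivity]. }
  set (r := f z - f x - f1 x * (z - x)).
  (* [phi] vanishes at [x] and [z]; at a critical point [c] of [phi], the mean value theorem
     for [f1] on [x, c] expresses [r] through [f2]. *)
  set (phi := fun t => (f t - f x - f1 x * (t - x)) * (z - x) ^ 2 - (t - x) ^ 2 * r).
  destruct (MVT_between phi (fun t => (f1 t - f1 x) * (z - x) ^ 2 - 2 * (t - x) * r) x z)
    as [c [Hc Hphi]]; [lra | |].
  { intros t Ht. unfold phi. assert (Hft := Hf t Ht). auto_derive.
    - eexists; exact Hft.
    - replace (Derive (fun y => f y) t) with (f1 t)
        by (symmetry; apply is_derive_unique, Hft).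
      ring. }
  assert (Hxc : x <> c) by (intros <-; unfold Rmin, Rmax in Hc; destruct (Rle_dec x z); lra).
  assert (Hrolle : (f1 c - f1 x) * (z - x) ^ 2 = 2 * (c - x) * r).
  { assert (phi z - phi x = 0) by (unfold phi, r; ring).
    apply (Rmult_eq_reg_r (z - x)); lra. }
  destruct (MVT_between f1 f2 x c Hxc) as [d [Hd Hf1d]].
  { intros t Ht. apply Hf1. unfold Rmin, Rmax in *. destruct (Rle_dec x z), (Rle_dec x c); lra. }
  exists d. split.
  { unfold Rmin, Rmax in *. destruct (Rle_dec x z), (Rle_dec x c); lra. }
  rewrite Hf1d in Hrolle.
  assert (Hr : 2 * r = f2 d * (z - x) ^ 2).
  { apply (Rmult_eq_reg_l (c - x)); [lra | intros Hc0; apply Hxc; lra]. }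
  fold r. rewrite Hr. field. lra.
Qed.

Lemma continuous_taylor_quot (f f1 f2 : R -> R) (a b x z : R) :
  (forall t, a < t < b -> is_derive f t (f1 t)) ->
  (forall t, a < t < b -> is_derive f1 t (f2 t)) ->
  continuous f2 x -> a < x < b -> a < z < b ->
  continuous (taylor_quot f f1 f2 x) z.
Proof.
  intros Hf Hf1 Hf2 Hx Hz. destruct (Req_EM_T z x) as [-> | Hzx].
  - apply filterlim_locally. intros eps.
    destruct (proj1 (filterlim_locally f2 (f2 x)) Hf2 eps) as [d Hd].
    assert (Hdelta : 0 < Rmin d (Rmin (x - a) (b - x))).
    { destruct d as [d Hd0]. simpl. repeat apply Rmin_glb_lt; lra. }
    exists (mkposreal _ Hdelta). intros y Hy. apply ball_Rabs in Hy.
    change (Rabs (y - x) < Rmin d (Rmin (x - a) (b - x))) in Hy.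
    pose proof (Rmin_l d (Rmin (x - a) (b - x))). pose proof (Rmin_r d (Rmin (x - a) (b - x))).
    pose proof (Rmin_l (x - a) (b - x)). pose proof (Rmin_r (x - a) (b - x)).
    apply Rabs_def2 in Hy.
    assert (Hseg : forall t, Rmin x y <= t <= Rmax x y -> a < t < b /\ Rabs (t - x) < d).
    { intros t Ht. unfold Rmin, Rmax in Ht. repeat split; try apply Rabs_def1;
        destruct (Rle_dec x y); lra. }
    destruct (taylor_quot_between f f1 f2 x y) as [t [Ht ->]].
    + intros t Ht. apply Hf, Hseg, Ht.
    + intros t Ht. apply Hf1, Hseg, Ht.
    + replace (taylor_quot f f1 f2 x x) with (f2 x)
        by (unfold taylor_quot; destruct (Req_EM_T x x); congruence).
      apply Hd, ball_Rabs, Hseg, Ht.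
  - apply (continuous_ext_loc _ (fun y => 2 * (f y - f x - f1 x * (y - x)) / (y - x) ^ 2)).
    + apply (filter_imp (fun y => y <> x)); [| exact (open_neq x z Hzx)].
      intros y Hyx. unfold taylor_quot. destruct (Req_EM_T y x); congruence.
    + apply (ex_derive_continuous (V := R_NormedModule)). assert (Hfz := Hf z Hz). auto_derive.
      split; [eexists; exact Hfz |]. split; [| exact I].
      rewrite Rmult_1_r. apply Rmult_integral_contrapositive_currified; lra.
Qed.

Section Profile.

Variable h : R -> R.
Hypothesis h_smooth : smooth h.
Hypothesis h_left : forall T, T <= 0 -> h T = PI / 2.
Hypothesis h_mid : forall T, 0 < T < 1 -> 0 < h T < PI / 2.
Hypothesis h_right : forall T, 1 <= T -> h T = 0.

Lemma cos_h_pos t : 0 < t -> 0 < cos (h t).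
Proof.
  intros Ht. destruct (Rlt_or_le t 1) as [Ht1 | Ht1].
  - apply cos_gt_0; destruct (h_mid t); lra.
  - rewrite h_right, cos_0 by exact Ht1. lra.
Qed.

Lemma sin_h_pos t : t < 1 -> 0 < sin (h t).
Proof.
  intros Ht. destruct (Rle_or_lt t 0) as [Ht0 | Ht0].
  - rewrite h_left, sin_PI2 by exact Ht0. lra.
  - apply sin_gt_0; destruct (h_mid t); lra.
Qed.

Definition gfun' t := Derive h t / cos (h t) ^ 2.
Definition gfun'' t :=
  Derive_n h 2 t / cos (h t) ^ 2 + 2 * Derive h t ^ 2 * sin (h t) / cos (h t) ^ 3.

Lemma is_derive_gfun t : 0 < t -> is_derive (gfun h) t (gfun' t).
Proof.
  intros Ht. pose proof (cos_h_pos t Ht). unfold gfun, tan, gfun'. auto_derive.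
  - repeat split; first [exact (h_smooth 1%nat t) | lra].
  - pose proof (sin2_cos2 (h t)) as Hpyth. unfold Rsqr in Hpyth.
    change (Derive (fun x => h x) t) with (Derive h t).
    replace (Derive h t / cos (h t) ^ 2) with
      (Derive h t * (sin (h t) * sin (h t) + cos (h t) * cos (h t)) / cos (h t) ^ 2)
      by (rewrite Hpyth; field; lra).
    field. lra.
Qed.

Lemma is_derive_gfun' t : 0 < t -> is_derive gfun' t (gfun'' t).
Proof.
  intros Ht. pose proof (cos_h_pos t Ht). unfold gfun', gfun''. auto_derive.
  - repeat split; first [exact (h_smooth 1%nat t) | exact (h_smooth 2%nat t)
    | repeat apply Rmult_integral_contrapositive_currified; lra].
  - change (Derive (fun x => h x) t) with (Derive h t).
    change (Derive (fun x => Derive h x) t) with (Derive_n h 2 t).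
    field. lra.
Qed.

Lemma continuous_gfun'' t : 0 < t -> continuous gfun'' t.
Proof.
  intros Ht. pose proof (cos_h_pos t Ht).
  apply (ex_derive_continuous (V := R_NormedModule)). unfold gfun''. auto_derive.
  repeat split; first [exact (h_smooth 1%nat t) | exact (h_smooth 2%nat t)
    | exact (h_smooth 3%nat t) | repeat apply Rmult_integral_contrapositive_currified; lra].
Qed.

Lemma Derive_n_h_right n t : 1 < t -> Derive_n h (S n) t = 0.
Proof.
  intros Ht. rewrite (Derive_n_ext_loc h (fun _ => 0)) by
    (apply (filter_imp (fun u => 1 < u)); [intros u Hu; apply h_right; lra |];
     exact (open_gt 1 t Ht)).
  apply Derive_n_const.
Qed.

Lemma gfun''_1 : gfun'' 1 = 0.
Proof.
  apply continuous_right_const; [apply continuous_gfun''; lra |].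
  intros t Ht. unfold gfun''. rewrite (Derive_n_h_right 1 t Ht).
  change (Derive h t) with (Derive_n h 1 t). rewrite (Derive_n_h_right 0 t Ht). field.
  pose proof (cos_h_pos t ltac:(lra)). lra.
Qed.

Lemma gfun_1 : gfun h 1 = 0.
Proof. unfold gfun. rewrite h_right by lra. apply tan_0. Qed.

Lemma gfun''_small_near_1 a e : a < 1 -> 0 < e ->
  exists y, a <= y < 1 /\ forall t, y <= t <= 1 -> Rabs (gfun'' t) <= e.
Proof.
  intros Ha He.
  destruct (proj1 (filterlim_locally gfun'' (gfun'' 1)) (continuous_gfun'' 1 Rlt_0_1)
    (mkposreal e He)) as [d Hd].
  exists (Rmax a (1 - d / 2)). pose proof (cond_pos d). split.
  - split; [apply Rmax_l | apply Rmax_lub_lt; lra].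
  - intros t Ht. pose proof (Rmax_r a (1 - d / 2)).
    assert (Hball : ball 1 d t) by (apply ball_Rabs, Rabs_def1; lra).
    specialize (Hd t Hball). change (Rabs (gfun'' t - gfun'' 1) < e) in Hd.
    rewrite gfun''_1, Rminus_0_r in Hd. lra.
Qed.

Lemma gfun_le_linear :
  exists L, 0 < L /\ forall z, 1 / 2 <= z < 1 -> gfun h z <= L * (1 - z).
Proof.
  destruct (continuous_segment_bounded gfun' (1 / 2) 1) as [M HM]; [lra | |].
  { intros t Ht. apply (ex_derive_continuous (V := R_NormedModule)).
    eexists. apply is_derive_gfun'. lra. }
  exists (Rabs M + 1). split; [pose proof (Rabs_pos M); lra |]. intros z Hz.
  destruct (MVT_between (gfun h) gfun' z 1) as [c [Hc Hmvt]]; [lra | |].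
  - intros t Ht. apply is_derive_gfun. unfold Rmin in Ht. destruct (Rle_dec z 1); lra.
  - rewrite gfun_1 in Hmvt. unfold Rmin, Rmax in Hc. destruct (Rle_dec z 1); [| lra].
    assert (Hbound : - gfun' c <= Rabs M + 1).
    { pose proof (HM c ltac:(lra)). pose proof (Rabs_maj2 (gfun' c)).
      pose proof (Rle_abs M). lra. }
    replace (gfun h z) with (- gfun' c * (1 - z)) by lra.
    apply Rmult_le_compat_r; lra.
Qed.

Lemma continuous_cot_h t : t < 1 -> continuous (fun z => cot (h z)) t.
Proof.
  intros Ht. pose proof (sin_h_pos t Ht).
  apply (ex_derive_continuous (V := R_NormedModule)). unfold cot. auto_derive.
  repeat split; first [exact (h_smooth 1%nat t) | lra].
Qed.

Lemma cot_h_pos z : 0 < z < 1 -> 0 < cot (h z).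
Proof.
  intros Hz. apply Rdiv_lt_0_compat; [apply cos_h_pos | apply sin_h_pos]; lra.
Qed.

Lemma Bfun_pos x : 0 < Bfun h x.
Proof. apply exp_pos. Qed.

Lemma is_derive_RInt_cot_h x : x < 1 ->
  is_derive (fun y => RInt (fun z => cot (h z)) 0 y) x (cot (h x)).
Proof.
  intros Hx.
  apply (is_derive_RInt (fun z => cot (h z)) _ 0); [| exact (continuous_cot_h x Hx)].
  apply (filter_imp (fun y => y < 1)); [| exact (open_lt 1 x Hx)].
  intros y Hy. apply (RInt_correct (V := R_CompleteNormedModule)), ex_RInt_continuous.
  intros z Hz. apply continuous_cot_h. unfold Rmax in Hz. destruct (Rle_dec 0 y); lra.
Qed.

Lemma is_derive_Bfun x : x < 1 -> is_derive (Bfun h) x (Bfun h x * cot (h x)).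
Proof.
  intros Hx. unfold Bfun. set (I := fun y => RInt (fun z => cot (h z)) 0 y).
  replace (exp (I x) * cot (h x)) with (scal (cot (h x)) (exp (I x))) by apply Rmult_comm.
  apply (is_derive_comp exp I); [apply is_derive_Reals, derivable_pt_lim_exp |].
  exact (is_derive_RInt_cot_h x Hx).
Qed.

Lemma continuous_Bfun' z : z < 1 -> continuous (fun t => Bfun h t * cot (h t)) z.
Proof.
  intros Hz. apply (continuous_mult (K := R_AbsRing)).
  - apply (ex_derive_continuous (V := R_NormedModule)). eexists. exact (is_derive_Bfun z Hz).
  - exact (continuous_cot_h z Hz).
Qed.

Lemma cot_h_inv_gfun z : 0 < z < 1 -> cot (h z) = / gfun h z.
Proof.
  intros Hz. pose proof (cos_h_pos z (proj1 Hz)). pose proof (sin_h_pos z (proj2 Hz)).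
  unfold cot, gfun, tan. field. lra.
Qed.

Lemma RInt_cot_h_cvg :
  filterlim (fun x => RInt (fun z => cot (h z)) 0 x) (at_left 1) (Rbar_locally p_infty).
Proof.
  destruct gfun_le_linear as [L [HL Hg]].
  set (I := fun x => RInt (fun z => cot (h z)) 0 x).
  set (phi := fun x => I x + ln (1 - x) / L).
  apply (filterlim_ge_p_infty (fun x => phi (1 / 2) - ln (1 - x) / L));
    [| exact (filterlim_log_at_left_1 L (phi (1 / 2)) HL)].
  assert (Hhalf : 0 < 1 / 2) by lra. exists (mkposreal _ Hhalf).
  intros x Hx Hx1. change (Rabs (x - 1) < 1 / 2) in Hx. apply Rabs_def2 in Hx.
  destruct (MVT_between phi (fun c => cot (h c) - / (L * (1 - c))) (1 / 2) x)
    as [c [Hc Hmvt]]; rewrite ?Rmin_left, ?Rmax_right in * by lra; [lra | |].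
  - intros c Hc. unfold phi. unfold Rminus at 1. apply (is_derive_plus I).
    + apply is_derive_RInt_cot_h. lra.
    + auto_derive; [lra | field; lra].
  - assert (Hcot : / (L * (1 - c)) <= cot (h c)).
    { rewrite cot_h_inv_gfun by lra. apply Rinv_le_contravar; [| apply Hg; lra].
      apply tan_gt_0; destruct (h_mid c); lra. }
    assert (0 <= (cot (h c) - / (L * (1 - c))) * (x - 1 / 2)) by (apply Rmult_le_pos; lra).
    unfold phi in *. lra.
Qed.

Lemma Bfun_cvg : filterlim (Bfun h) (at_left 1) (Rbar_locally p_infty).
Proof. exact (filterlim_comp _ _ _ _ exp _ _ _ RInt_cot_h_cvg is_lim_exp_p). Qed.

(* Equal to the integrand of [Dfun] for [z <> x]; unlike the latter, which takes the junk
   value 0 at [z = x] (division by zero), it is continuous on [0 < z < 1]. *)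
Definition D_integrand x z :=
  Bfun h z * cot (h z) * (- cos (x - z) * taylor_quot (gfun h) gfun' gfun'' x z / 2).

Lemma Dfun_eq kappa x : 0 < kappa <= x -> x < 1 ->
  Dfun h kappa x = / Bfun h x * RInt (D_integrand x) kappa x.
Proof.
  intros Hk Hx. unfold Dfun. f_equal. apply RInt_ext.
  rewrite Rmin_left, Rmax_right by lra. intros z Hz.
  rewrite (is_derive_unique _ _ _ (is_derive_Bfun z ltac:(lra))).
  rewrite (is_derive_unique _ _ _ (is_derive_gfun x ltac:(lra))).
  unfold D_integrand, taylor_quot. destruct (Req_EM_T z x) as [Hzx | Hzx]; [lra |].
  (* [simpl] turns the carrier of the integrand's codomain back into [R], for [field]. *)
  simpl. field. lra.
Qed.

Lemma continuous_D_integrand x z : 0 < x < 1 -> 0 < z < 1 -> continuous (D_integrand x) z.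
Proof.
  intros Hx Hz. unfold D_integrand.
  apply (continuous_mult (K := R_AbsRing)); [apply continuous_Bfun'; lra |].
  apply (continuous_mult (K := R_AbsRing) (fun y => - cos (x - y) * _)); [| apply continuous_const].
  apply (continuous_mult (K := R_AbsRing)).
  - apply (ex_derive_continuous (V := R_NormedModule)). auto_derive. exact I.
  - apply (continuous_taylor_quot _ _ _ 0 2); try lra.
    + intros t Ht. apply is_derive_gfun. lra.
    + intros t Ht. apply is_derive_gfun'. lra.
    + apply continuous_gfun''. lra.
Qed.

Lemma Rabs_D_integrand_le x z c : 0 < z <= x -> x < 1 ->
  (forall t, z <= t <= x -> Rabs (gfun'' t) <= c) ->
  Rabs (D_integrand x z) <= c / 2 * (Bfun h z * cot (h z)).
Proof.
  intros Hz Hx Hc.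
  destruct (taylor_quot_between (gfun h) gfun' gfun'' x z) as [d [Hd Hquot]];
    rewrite ?Rmin_right, ?Rmax_left in * by lra.
  - intros t Ht. apply is_derive_gfun. lra.
  - intros t Ht. apply is_derive_gfun'. lra.
  - pose proof (Hc d Hd). pose proof (COS_bound (x - z)) as Hcos.
    assert (HB' : 0 < Bfun h z * cot (h z))
      by (apply Rmult_lt_0_compat; [apply Bfun_pos | apply cot_h_pos; lra]).
    unfold D_integrand. rewrite Hquot, Rabs_mult, (Rabs_pos_eq (_ * _)) by lra.
    rewrite Rmult_comm. apply Rmult_le_compat_r; [lra |].
    unfold Rdiv. rewrite Rabs_mult, Rabs_mult, Rabs_Ropp, (Rabs_pos_eq (/ 2)) by lra.
    assert (Rabs (cos (x - z)) <= 1) by (apply Rabs_le; lra).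
    pose proof (Rabs_pos (cos (x - z))). pose proof (Rabs_pos (gfun'' d)). nra.
Qed.

Lemma Rabs_RInt_D_integrand_le x a b c : 0 < a <= b -> b <= x < 1 ->
  (forall t, a <= t <= x -> Rabs (gfun'' t) <= c) ->
  Rabs (RInt (D_integrand x) a b) <= c / 2 * (Bfun h b - Bfun h a).
Proof.
  intros Hab Hbx Hc.
  apply (Rabs_RInt_le_increment _ _ (fun t => Bfun h t * cot (h t))); [lra | | |].
  - apply (ex_RInt_continuous (V := R_CompleteNormedModule)).
    rewrite Rmin_left, Rmax_right by lra. intros z Hz. apply continuous_D_integrand; lra.
  - intros t Ht. split; [apply is_derive_Bfun | apply continuous_Bfun']; lra.
  - intros t Ht. apply Rabs_D_integrand_le; [lra | lra |].
    intros s Hs. apply Hc. lra.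
Qed.

Lemma Rabs_Dfun_le kappa y x M e : 0 < kappa <= y -> y <= x < 1 ->
  (forall t, kappa <= t <= x -> Rabs (gfun'' t) <= M) ->
  (forall t, y <= t <= x -> Rabs (gfun'' t) <= e) ->
  Rabs (Dfun h kappa x) <= (M * Bfun h y / Bfun h x + e) / 2.
Proof.
  intros Hy Hx HM He.
  assert (Hex : forall a b, kappa <= a <= b -> b <= x -> ex_RInt (D_integrand x) a b).
  { intros a b Hab Hb. apply (ex_RInt_continuous (V := R_CompleteNormedModule)).
    rewrite Rmin_left, Rmax_right by lra. intros z Hz. apply continuous_D_integrand; lra. }
  rewrite Dfun_eq by lra. rewrite <- (RInt_Chasles _ kappa y x) by (apply Hex; lra).
  pose proof (Rabs_RInt_D_integrand_le x kappa y M ltac:(lra) ltac:(lra) HM) as Hleft.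
  pose proof (Rabs_RInt_D_integrand_le x y x e ltac:(lra) ltac:(lra) He) as Hright.
  pose proof (Rabs_triang (RInt (D_integrand x) kappa y) (RInt (D_integrand x) y x)).
  assert (0 <= M) by (pose proof (HM kappa ltac:(lra)); pose proof (Rabs_pos (gfun'' kappa)); lra).
  assert (0 <= e) by (pose proof (He x ltac:(lra)); pose proof (Rabs_pos (gfun'' x)); lra).
  pose proof (Bfun_pos kappa). pose proof (Bfun_pos y). pose proof (Bfun_pos x).
  rewrite Rabs_mult, Rabs_inv, (Rabs_pos_eq (Bfun h x)) by lra.
  apply (Rmult_le_reg_l (Bfun h x)); [lra |].
  rewrite <- Rmult_assoc, Rinv_r, Rmult_1_l by lra.
  replace (Bfun h x * ((M * Bfun h y / Bfun h x + e) / 2))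
    with (M / 2 * Bfun h y + e / 2 * Bfun h x) by (field; lra).
  change (plus ?u ?v) with (u + v). nra.
Qed.

End Profile.

Theorem mainTheorem5 (h : R -> R) (kappa : R)
  (h_smooth : smooth h)
  (h_left : forall T, T <= 0 -> h T = PI / 2)
  (h_mid : forall T, 0 < T < 1 -> 0 < h T < PI / 2)
  (h_right : forall T, 1 <= T -> h T = 0)
  (g3_neg : forall x, 0 < x < 1 -> Derive_n (gfun h) 3 x < 0)
  (hkappa : 0 < kappa < 1) :
  filterlim (Dfun h kappa) (at_left 1) (locally 0).
Proof.
  destruct (continuous_segment_bounded (gfun'' h) kappa 1) as [M HM]; [lra | |].
  { intros t Ht. apply (continuous_gfun'' h h_smooth h_mid h_right). lra. }
  apply filterlim_locally. intros eps.
  destruct (gfun''_small_near_1 h h_smooth h_mid h_right kappa eps) as [y [Hy Hsmall]];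
    [lra | apply cond_pos |].
  assert (HB_large : at_left 1 (fun x => M * Bfun h y / eps < Bfun h x)).
  { apply (Bfun_cvg h h_smooth h_left h_mid h_right). exists (M * Bfun h y / eps). tauto. }
  assert (Hnear : at_left 1 (fun x => y < x < 1)).
  { unfold at_left, within. apply (filter_imp (fun x => y < x)); [intros x Hx Hx1; lra |].
    exact (open_gt y 1 (proj2 Hy)). }
  refine (filter_imp _ _ _ (filter_and _ _ Hnear HB_large)). intros x [Hx HBx].
  pose proof (Bfun_pos h x) as HBpos.
  pose proof (Rabs_Dfun_le h h_smooth h_left h_mid h_right kappa y x M eps
    ltac:(lra) ltac:(lra) ltac:(intros t Ht; apply HM; lra) ltac:(intros t Ht; apply Hsmall; lra)).
  pose proof (cond_pos eps) as Heps.
  assert (M * Bfun h y / Bfun h x < eps).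
  { apply (Rmult_lt_reg_r (Bfun h x)); [lra |].
    replace (M * Bfun h y / Bfun h x * Bfun h x) with (M * Bfun h y / eps * eps) by (field; lra).
    rewrite (Rmult_comm eps). apply Rmult_lt_compat_r; lra. }
  apply ball_Rabs. change (Rabs (Dfun h kappa x - 0) < eps). rewrite Rminus_0_r. lra.
Qed.
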